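(* Let $G$ be a twin-free simple graph on vertex set $\{1,\dots,n\}$, and suppose that for some $1\le m\le n$ the set $\{1,2,\dots,m\}$ is a minimal identifying code of $G$ (i.e. an identifying code no proper subset of which is an identifying code). Then the lexicographic algorithm (Algorithm 1) applied to $G$ returns exactly $\{1,2,\dots,m\}$.
   Context: Vertices of $G$ are identified with the integers $1,\dots,n$ and ordered by the usual order. For a vertex $v$, $N(v)=\{v\}\cup\{w : vw\in E(G)\}$ is its closed neighbourhood. A set $C\subseteq V(G)$ is an identifying code if the sets $N(v)\cap C$, $v\in V(G)$, are all nonempty and pairwise distinct. $G$ is twin-free if $N(v)\neq N(w)$ for all distinct vertices $v,w$. The lexicographic algorithm (Algorithm 1): set $C_0=\emptyset$. For $j=1,2,\dots,n$ in turn: (i) if $N(j)\cap C_{j-1}=\emptyset$, set $C_j=C_{j-1}\cup\{\min N(j)\}$; (ii) otherwise, if there exists $k\in\{1,\dots,j-1\}$ with $N(k)\cap C_{j-1}=N(j)\cap C_{j-1}$, let $k$ be the least such index; if $N(j)\neq N(k)$ set $C_j=C_{j-1}\cup\{\min(N(j)\triangle N(k))\}$, while if $N(j)=N(k)$ the algorithm stops immediately and returns ''failure''; (iii) otherwise set $C_j=C_{j-1}$. If the algorithm never fails, it returns $C_n$. Here $\triangle$ denotes symmetric difference. *)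

(* Vertices 1..n of the paper are represented by 'I_n,
   paper vertex v <-> ordinal v-1; the usual order is preserved. *)
From mathcomp Require Import all_boot.
Set Implicit Arguments. Unset Strict Implicit. Unset Printing Implicit Defensive.

Section Defs.
Variable n : nat.
Variable e : rel 'I_n.

Definition simple_graph := symmetric e /\ irreflexive e.

Definition cnbhd (v : 'I_n) : {set 'I_n} := [set w | (w == v) || e v w].

Definition twin_free := forall v w : 'I_n, cnbhd v = cnbhd w -> v = w.

Definition identifying_code (C : {set 'I_n}) :=
  (forall v, cnbhd v :&: C != set0) /\
  (forall v w, v != w -> cnbhd v :&: C != cnbhd w :&: C).

Definition minimal_identifying_code (C : {set 'I_n}) :=
  identifying_code C /\ (forall C' : {set 'I_n}, C' \proper C -> ~ identifying_code C').

Definition set_min (A : {set 'I_n}) : option 'I_n :=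
  [pick x in A | [forall y in A, (x <= y)%N]].

Definition symdiff (A B : {set 'I_n}) : {set 'I_n} := (A :\: B) :|: (B :\: A).

(* one step of Algorithm 1 at vertex j, given C_{j-1}; None = failure *)
Definition lex_step (j : 'I_n) (C : {set 'I_n}) : option {set 'I_n} :=
  if cnbhd j :&: C == set0 then
    omap (fun x => x |: C) (set_min (cnbhd j))
  else
    match [pick k : 'I_n | [&& (k < j)%N, cnbhd k :&: C == cnbhd j :&: C &
                       [forall k' : 'I_n, ((k' < j)%N && (cnbhd k' :&: C == cnbhd j :&: C))
                                           ==> (k <= k')%N]]] with
    | Some k =>
        if cnbhd j != cnbhd k then
          omap (fun x => x |: C) (set_min (symdiff (cnbhd j) (cnbhd k)))
        else None
    | None => Some C
    end.

Definition lex_algorithm : option {set 'I_n} :=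
  foldl (fun oC j => obind (lex_step j) oC) (Some set0) (ord_enum n).

End Defs.

From mathcomp Require Import all_boot.

Set Implicit Arguments. Unset Strict Implicit. Unset Printing Implicit Defensive.

(* Let D be an identifying code of a twin-free graph that is downward closed
   (y <= x and x in D imply y in D); {1,..,m} is such a code.  We show that
   Algorithm 1 never fails and returns an identifying code C contained in D.
   The invariant after processing the vertices j' < j is [partial_code j C]:
   C is a subset of D which covers and separates all vertices j' < j.
   Every vertex added by the algorithm is the minimum of a set (N(j), or
   N(j) Δ N(k)) that meets D, hence lies in D because D is downward closed;
   the added vertex (or nothing, in case (iii)) restores the invariant for j,
   and twin-freeness rules out failure.  At j = n the invariant says that C
   is an identifying code inside D, so if D is minimal then C = D. *)

Section Sets.
Variable n : nat.
Implicit Types A B C : {set 'I_n}.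

Lemma set_minP A : A != set0 ->
  exists x, [/\ set_min A = Some x, x \in A & forall y, y \in A -> (x <= y)%N].
Proof.
move=> /set0Pn[x0 x0A]; rewrite /set_min; case: pickP => [x /andP[xA /forallP xmin]|none].
  by exists x; split=> // y yA; apply: (implyP (xmin y)).
have [y yA ymin] := arg_minnP (fun i : 'I_n => nat_of_ord i) x0A.
case/negP: (none y); apply/andP; split=> //; apply/forallP => z; exact/implyP/ymin.
Qed.

Lemma trace_eq_symdiff A B C :
  (A :&: C == B :&: C) = (symdiff A B :&: C == set0).
Proof.
apply/eqP/eqP => h; apply/setP => z; have /setP/(_ z) := h;
by rewrite /symdiff !inE; case: (z \in A); case: (z \in B); case: (z \in C).
Qed.

Lemma trace_eq_sub {A B C C' : {set 'I_n}} :
  C \subset C' -> A :&: C' = B :&: C' -> A :&: C = B :&: C.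
Proof. by move=> sCC' h; rewrite -(setIidPr sCC') !setIA h. Qed.

Lemma trace_neq0_sub {A C C' : {set 'I_n}} :
  C \subset C' -> A :&: C != set0 -> A :&: C' != set0.
Proof.
move=> sCC'; apply: contraNN; rewrite -!subset0 => /(subset_trans _); apply.
exact: setIS.
Qed.

End Sets.

Section Algorithm.
Variables (n : nat) (e : rel 'I_n).
Hypothesis twin_freeG : twin_free e.

Variable D : {set 'I_n}.
Hypothesis D_code : identifying_code e D.
Hypothesis D_down : forall x y : 'I_n, x \in D -> (y <= x)%N -> y \in D.

Local Notation trace v C := (cnbhd e v :&: C).

Lemma set_min_in_D {A : {set 'I_n}} : A :&: D != set0 ->
  exists x, [/\ set_min A = Some x, x \in A & x \in D].
Proof.
move=> /set0Pn[y]; rewrite inE => /andP[yA yD].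
have [|x [mx xA xmin]] := @set_minP n A; first by apply/set0Pn; exists y.
by exists x; split=> //; apply: D_down yD (xmin y yA).
Qed.

Definition partial_code (j : nat) (C : {set 'I_n}) :=
  [/\ C \subset D,
      forall v : 'I_n, (v < j)%N -> trace v C != set0 &
      forall v w : 'I_n, (v < j)%N -> (w < j)%N -> v != w -> trace v C != trace w C].

Lemma partial_code0 : partial_code 0 set0.
Proof. by split=> //; exact: sub0set. Qed.

Lemma leq_ord_split (v j : 'I_n) : (v <= j)%N -> v = j \/ (v < j)%N.
Proof. by rewrite leq_eqVlt => /orP[/eqP/ord_inj|]; [left|right]. Qed.

Lemma partial_code_extend (j : 'I_n) (C C' : {set 'I_n}) : partial_code j C ->
  C \subset C' -> C' \subset D -> trace j C' != set0 ->
  (forall w : 'I_n, (w < j)%N -> trace j C' != trace w C') ->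
  partial_code j.+1 C'.
Proof.
move=> [_ cov sep] sCC' sC'D covj sepj; split=> // [v|v w].
  rewrite ltnS => /leq_ord_split[-> //|vj].
  exact: trace_neq0_sub sCC' (cov _ vj).
rewrite !ltnS => /leq_ord_split[-> |vj] /leq_ord_split[-> |wj] vw.
- by rewrite eqxx in vw.
- exact: sepj.
- by rewrite eq_sym; apply: sepj.
- apply: contraNN (sep _ _ vj wj vw) => /eqP h; apply/eqP.
  exact: trace_eq_sub sCC' h.
Qed.

Lemma step_uncovered (j : 'I_n) (C : {set 'I_n}) : partial_code j C -> trace j C = set0 ->
  exists2 x, set_min (cnbhd e j) = Some x & partial_code j.+1 (x |: C).
Proof.
move=> inv j0; have [sCD cov _] := inv.
have [x [mx xN xD]] := set_min_in_D (D_code.1 j).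
exists x => //; apply: partial_code_extend inv (subsetUr _ _) _ _ _.
- by rewrite subUset sub1set xD.
- by apply/set0Pn; exists x; rewrite in_setI xN setU11.
- move=> w wj; apply: contraNN (cov _ wj) => /eqP h.
  by rewrite (trace_eq_sub (subsetUr [set x] C) (esym h)) j0.
Qed.

(* Case (ii): an earlier vertex k has the same trace as j; since G is
   twin-free N(j) <> N(k), and the algorithm adds min (N(j) Δ N(k)). *)
Lemma step_collision (j k : 'I_n) (C : {set 'I_n}) : partial_code j C -> (k < j)%N ->
  trace k C = trace j C ->
  cnbhd e j != cnbhd e k /\
  exists2 x, set_min (symdiff (cnbhd e j) (cnbhd e k)) = Some x
           & partial_code j.+1 (x |: C).
Proof.
move=> inv kj kjT; have [sCD cov sep] := inv.
have jk : j != k by apply: contraTneq kj => ->; rewrite ltnn.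
have Njk : cnbhd e j != cnbhd e k by apply: contraNN jk => /eqP/twin_freeG ->.
split=> //.
have symdiff_meets_D : symdiff (cnbhd e j) (cnbhd e k) :&: D != set0.
  by rewrite -trace_eq_symdiff; apply: D_code.2.
have [x [mx xS xD]] := set_min_in_D symdiff_meets_D.
have sep_x : trace j (x |: C) != trace k (x |: C).
  by rewrite trace_eq_symdiff; apply/set0Pn; exists x; rewrite in_setI xS setU11.
exists x => //; apply: partial_code_extend inv (subsetUr _ _) _ _ _.
- by rewrite subUset sub1set xD.
- by apply: trace_neq0_sub (subsetUr [set x] C) _; rewrite -kjT cov.
- move=> w wj; have [->|wk] := eqVneq w k; first exact: sep_x.
  apply: contraNN (sep _ _ wj kj wk) => /eqP h; rewrite kjT; apply/eqP.
  exact: trace_eq_sub (subsetUr [set x] C) (esym h).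
Qed.

Lemma step_separated (j : 'I_n) (C : {set 'I_n}) : partial_code j C -> trace j C != set0 ->
  (forall w : 'I_n, (w < j)%N -> trace w C != trace j C) ->
  partial_code j.+1 C.
Proof.
move=> inv covj sepj; have [sCD _ _] := inv.
apply: partial_code_extend inv (subxx _) sCD covj _.
by move=> w wj; rewrite eq_sym sepj.
Qed.

Lemma lex_step_partial (j : 'I_n) (C : {set 'I_n}) : partial_code j C ->
  exists2 C', lex_step e j C = Some C' & partial_code j.+1 C'.
Proof.
move=> inv; have [_ _ sep] := inv; rewrite /lex_step; have [/eqP j0|covj] := boolP (_ == set0).
  by have [x -> invx] := step_uncovered inv j0; exists (x |: C).
case: pickP => [k /and3P[kj /eqP kjT _]|none].
  have [-> [x -> invx]] := step_collision inv kj kjT; by exists (x |: C).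
exists C => //; apply: step_separated inv covj _ => w wj; apply/eqP => wjT.
(* w would be the least earlier vertex with the trace of j, since the
   traces of earlier vertices are pairwise distinct. *)
case/negP: (none w); rewrite wj wjT eqxx; apply/forallP => k.
apply/implyP => /andP[kj /eqP kjT]; suff /eqP -> : k == w by [].
have [//|kw] := eqVneq k w.
by have := sep _ _ kj wj kw; rewrite kjT wjT eqxx.
Qed.

Lemma lex_algorithm_code :
  exists2 C, lex_algorithm e = Some C & C \subset D /\ identifying_code e C.
Proof.
have size_enum : size (ord_enum n) = n.
  by rewrite -(size_map val) val_ord_enum size_iota.
have run k : (k <= n)%N -> exists2 C,
    foldl (fun oC j => obind (lex_step e j) oC) (Some set0) (take k (ord_enum n))
      = Some C & partial_code k C.
  elim: k => [|k IH] kn; first by exists set0; rewrite ?take0 //; exact: partial_code0.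
  have [C runC inv] := IH (ltnW kn); pose j := Ordinal kn.
  have nth_j : nth j (ord_enum n) k = j.
    by apply: val_inj; rewrite -(nth_map j k val) ?size_enum // val_ord_enum nth_iota.
  have [C' stepC' inv'] := @lex_step_partial j C inv.
  exists C' => //; rewrite (take_nth j) ?size_enum // foldl_rcons runC nth_j.
  exact: stepC'.
have [C runC [sCD cov sep]] := run n (leqnn n).
rewrite take_oversize ?size_enum // in runC.
exists C => //; split=> //; split=> [v|v w]; first exact: cov.
exact: sep.
Qed.

End Algorithm.

Theorem corollary1 (n : nat) (e : rel 'I_n) (m : nat) :
  simple_graph e -> twin_free e -> (1 <= m)%N -> (m <= n)%N ->
  minimal_identifying_code e [set i : 'I_n | (i < m)%N] ->
  lex_algorithm e = Some [set i : 'I_n | (i < m)%N].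
Proof.
move=> _ twin_freeG _ _ [D_code D_minimal].
have D_down (x y : 'I_n) : x \in [set i : 'I_n | (i < m)%N] -> (y <= x)%N ->
    y \in [set i : 'I_n | (i < m)%N].
  by rewrite !inE => xm yx; apply: leq_ltn_trans yx xm.
have [C -> [sCD C_code]] := lex_algorithm_code twin_freeG D_code D_down.
(* C is an identifying code inside the minimal code D, hence C = D. *)
congr Some; apply/eqP; rewrite eqEproper sCD /=.
by apply/negP => properCD; exact: D_minimal C properCD C_code.
Qed.
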